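(* No strategy proof and deterministic mechanism for locating two facilities on $[0,1]$ has approximation ratio smaller than $\frac{30}{29}$ for the optimal complemented Gini index of utilities.
   Context: Agents $1,\dots,n$ report locations $x_1,\dots,x_n\in[0,1]$; a deterministic mechanism maps each profile to a placement of two facilities $y_1,y_2\in[0,1]$. Agent $i$'s distance is $d_i=\min(|x_i-y_1|,|x_i-y_2|)$ and utility $u_i=1-d_i$. The Gini index of utilities is $G_u=\frac{\sum_i\sum_j|u_i-u_j|}{2n\sum_i u_i}$ and the complemented Gini index is $1-G_u$. A mechanism is strategy proof if no agent, by reporting a false location, can strictly reduce the distance from its true location to the nearest facility. The approximation ratio of a mechanism $M$ is the supremum over all profiles $x$ of $\mathrm{OPT}(x)/(1-G_u(M(x)))$, where $\mathrm{OPT}(x)$ is the maximum of $1-G_u$ over all placements of two facilities in $[0,1]$. *)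

From HB Require Import structures.
From mathcomp Require Import all_boot all_order all_algebra.
From mathcomp Require Import all_classical all_reals ereal.
Set Implicit Arguments. Unset Strict Implicit. Unset Printing Implicit Defensive.
Import Order.TTheory GRing.Theory Num.Theory.
Local Open Scope ring_scope.
Local Open Scope classical_set_scope.

Section FL.
Variable R : realType.

Definition in01 (x : R) : Prop := 0 <= x <= 1.

Definition valid_profile (n : nat) (x : 'I_n -> R) : Prop := forall i, in01 (x i).

Definition fdist (y : R * R) (a : R) : R := Num.min `|a - y.1| `|a - y.2|.

Definition util (y : R * R) (a : R) : R := 1 - fdist y a.

Definition gini (n : nat) (u : 'I_n -> R) : R :=
  (\sum_(i < n) \sum_(j < n) `|u i - u j|) / (2 * n%:R * \sum_(i < n) u i).

Definition cgini (n : nat) (x : 'I_n -> R) (y : R * R) : R :=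
  1 - gini (fun i => util y (x i)).

Definition OPT (n : nat) (x : 'I_n -> R) : R :=
  sup [set cgini x y | y in [set y : R * R | in01 y.1 /\ in01 y.2]].

Definition mechanism := forall n : nat, ('I_n -> R) -> R * R.

Definition mech_valid (M : mechanism) : Prop :=
  forall n (x : 'I_n -> R), valid_profile x -> in01 (M n x).1 /\ in01 (M n x).2.

Definition deviate (n : nat) (x : 'I_n -> R) (i : 'I_n) (a : R) : 'I_n -> R :=
  fun j => if j == i then a else x j.

Definition strategy_proof (M : mechanism) : Prop :=
  forall n (x : 'I_n -> R) (i : 'I_n) (a : R),
    valid_profile x -> in01 a ->
    fdist (M n x) (x i) <= fdist (M n (deviate x i a)) (x i).

Definition approx_ratio (M : mechanism) : \bar R :=
  ereal_sup [set r : \bar R | exists n : nat, (0 < n)%N /\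
     exists x : 'I_n -> R, valid_profile x /\ r = (OPT x / cgini x (M n x))%:E].

End FL.

From mathcomp Require Import all_boot all_order all_algebra.
From mathcomp Require Import all_classical all_reals ereal.
From mathcomp Require Import ring lra.
Import Order.TTheory GRing.Theory Num.Theory.
Local Open Scope ring_scope.

(* Consider the profile (1/2, 0, 1).  If the mechanism puts a facility at some
   y in [1/7, 6/7], then in the profile (y, 0, 1) the agent at y could report 1/2,
   so strategy-proofness forces a facility at y there too; the other facility then
   leaves agent 0 or agent 1 at distance at least 1/7.  Otherwise both facilities
   are more than 5/14 away from the agent at 1/2, while agent 0 or agent 1 is
   within 1/7 of one of them.  Either way the utilities are spread enough to give
   1 - G <= 29/30, whereas the placement (e, 1 - e) with e = min(y, 1 - y) / 2
   puts every agent of (y, 0, 1) at distance e, so OPT = 1. *)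

Section TwoFacilities.
Context {R : realType}.
Implicit Types (a b c p q : R) (z : R * R).

Lemma fdist_ge0 z a : 0 <= fdist z a.
Proof. by rewrite /fdist le_min !normr_ge0. Qed.

Lemma fdist_le1 z a : in01 z.1 -> in01 z.2 -> in01 a -> fdist z a <= 1.
Proof.
case: z => p q; rewrite /in01 /fdist /= => /andP[? ?] /andP[? ?] /andP[? ?].
by rewrite ge_min; apply/orP; left; rewrite ler_norml; apply/andP; split; lra.
Qed.

Lemma fdist_eq0 p q a : fdist (p, q) a = 0 <-> a = p \/ a = q.
Proof.
rewrite /fdist /=; split=> [|[->|->]]; last 2 first.
- by rewrite subrr normr0 min_l.
- by rewrite subrr normr0 min_r.
case: (leP `|a - p| `|a - q|) => _ /eqP; rewrite normr_eq0 subr_eq0 => /eqP; tauto.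
Qed.

Lemma fdist_attained p q a : exists2 y, y = p \/ y = q & fdist (p, q) a = `|a - y|.
Proof. by rewrite /fdist /=; case: leP => _; [exists p | exists q]; auto. Qed.

Lemma fdist0 p q : 0 <= p -> 0 <= q -> fdist (p, q) 0 = Num.min p q.
Proof. by move=> ? ?; rewrite /fdist !sub0r !normrN !ger0_norm. Qed.

Lemma fdist1 p q : p <= 1 -> q <= 1 -> fdist (p, q) 1 = 1 - Num.max p q.
Proof.
move=> ? ?; rewrite /fdist /= !ger0_norm ?subr_ge0 //.
by case: (leP p q) => pq; [rewrite min_r | rewrite min_l]; lra.
Qed.

Lemma fdist_mid p q a : p <= a -> a <= q -> fdist (p, q) a = Num.min (a - p) (q - a).
Proof. by move=> ? ?; rewrite /fdist /= ger0_norm ?subr_ge0 // ler0_norm ?subr_le0 // opprB. Qed.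

Lemma util_ge0 z a : in01 z.1 -> in01 z.2 -> in01 a -> 0 <= util z a.
Proof. by move=> ? ? ?; rewrite /util subr_ge0 fdist_le1. Qed.

Lemma gini_ge0 n (u : 'I_n -> R) : (forall i, 0 <= u i) -> 0 <= gini u.
Proof.
move=> u_ge0; apply: divr_ge0; first by do 2!(apply: sumr_ge0 => ? _).
by rewrite !mulr_ge0 ?sumr_ge0.
Qed.

Lemma gini_const n (u : 'I_n -> R) : (forall i j, u i = u j) -> gini u = 0.
Proof.
move=> u_const; rewrite /gini big1 ?mul0r // => i _.
by rewrite big1 // => j _; rewrite (u_const i j) subrr normr0.
Qed.

Lemma OPT_ge1 n (x : 'I_n -> R) z : valid_profile x -> in01 z.1 -> in01 z.2 ->
  (forall i j, fdist z (x i) = fdist z (x j)) -> 1 <= OPT x.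
Proof.
move=> x01 z1 z2 equidistant.
have cgini_le1 w : in01 w.1 /\ in01 w.2 -> cgini x w <= 1.
  by case=> ? ?; rewrite /cgini gerBl gini_ge0 // => i; apply: util_ge0.
have <- : cgini x z = 1.
  by rewrite /cgini gini_const ?subr0 // => i j; rewrite /util (equidistant i j).
apply: sup_upper_bound; last by exists z.
split; first by exists (cgini x z), z.
by exists 1 => _ [w /cgini_le1 ? <-].
Qed.

Lemma approx_ratio_ge (M : mechanism R) n (x : 'I_n -> R) c : (0 < n)%N ->
  valid_profile x -> 1 <= OPT x -> 0 < cgini x (M n x) <= c ->
  (c^-1%:E <= approx_ratio M)%E.
Proof.
move=> n_gt0 x01 OPT_ge1 /andP[cgini_gt0 cgini_le].
apply: (@le_trans _ _ (OPT x / cgini x (M n x))%:E); last first.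
  by apply: ereal_sup_ubound; exists n; split => //; exists x.
have c_gt0 := lt_le_trans cgini_gt0 cgini_le.
rewrite lee_fin (@le_trans _ _ (cgini x (M n x))^-1) //.
  by rewrite lef_pV2 ?posrE.
by rewrite -[X in X <= _]mul1r ler_wpM2r // invr_ge0 ltW.
Qed.

Lemma strategy_proof_keeps_facility (M : mechanism R) n (x : 'I_n -> R) i a :
  strategy_proof M -> valid_profile x -> in01 a ->
  fdist (M n (deviate x i a)) (x i) = 0 -> fdist (M n x) (x i) = 0.
Proof.
move=> M_sp x01 a01 at_facility; apply/le_anti.
by rewrite fdist_ge0 -at_facility M_sp.
Qed.

Lemma in01_half : in01 (2^-1 : R).
Proof. by apply/andP; split; lra. Qed.

Definition prof3 a b c : 'I_3 -> R := fun i => nth 0 [:: a; b; c] i.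

Lemma valid_prof3 a b c : in01 a -> in01 b -> in01 c -> valid_profile (prof3 a b c).
Proof. by move=> ? ? ? [[|[|[|i]]] ?]. Qed.

Lemma valid_prof3_01 y : in01 y -> valid_profile (prof3 y 0 1).
Proof. by move=> y01; apply: valid_prof3; rewrite // /in01 ?lexx ?ler01. Qed.

Lemma deviate_prof3 a b c a' : deviate (prof3 a b c) ord0 a' = prof3 a' b c.
Proof. by apply: funext => -[[|[|[|i]]] ?]. Qed.

Lemma gini_prof3 a b c :
  gini (prof3 a b c) = (`|a - b| + `|a - c| + `|b - c|) / (3 * (a + b + c)).
Proof.
rewrite /gini /prof3 !big_ord_recl !big_ord0 /= !subrr normr0.
rewrite (distrC b a) (distrC c a) (distrC c b).
transitivity (2 * (`|a - b| + `|a - c| + `|b - c|) / (2 * (3 * (a + b + c)))).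
  by congr (_ / _); ring.
by rewrite -mulf_div divff ?mul1r.
Qed.

Lemma gini_prof3_bounds a b c : 0 <= a -> 0 <= b -> 0 <= c -> 0 < a + b + c ->
  a + b + c <= 20 * `|a - b| \/ a + b + c <= 20 * `|a - c| ->
  0 < 1 - gini (prof3 a b c) <= 29 / 30.
Proof.
move=> a_ge0 b_ge0 c_ge0 sum_gt0 far_pair.
suff /andP[? ?] : 30^-1 <= gini (prof3 a b c) < 1 by apply/andP; split; lra.
have ab_le : `|a - b| <= a + b by rewrite ler_norml; lra.
have ac_le : `|a - c| <= a + c by rewrite ler_norml; lra.
have bc_le : `|b - c| <= b + c by rewrite ler_norml; lra.
have := ler_distD c a b; have := ler_distD b a c; rewrite (distrC c b).
rewrite gini_prof3 ler_pdivlMr ?ltr_pdivrMr ?mulr_gt0 //; lra.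
Qed.

Lemma cgini_prof3 z a b c :
  cgini (prof3 a b c) z = 1 - gini (prof3 (util z a) (util z b) (util z c)).
Proof. by rewrite /cgini; congr (1 - gini _); apply: funext => -[[|[|[|i]]] ?]. Qed.

Lemma OPT_prof3_ge1 y : in01 y -> 1 <= OPT (prof3 y 0 1).
Proof.
move=> y01; have /andP[y_ge0 y_le1] := y01.
pose e := Num.min y (1 - y) / 2.
have e_ge0 : 0 <= e by rewrite divr_ge0 // le_min y_ge0 subr_ge0.
have [e_le_y e_le_1y] : e <= y /\ e <= 1 - y by rewrite /e; case: (leP y (1 - y)); lra.
have dist_e i : fdist (e, 1 - e) (prof3 y 0 1 i) = e.
  case: i => -[|[|[|i]]] i_lt3 //; rewrite /prof3 /=.
  - by rewrite fdist_mid; [rewrite [1 - e - y]addrAC -addr_minl /e; field | lra | lra].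
  - by rewrite fdist0 ?min_l; lra.
  - by rewrite fdist1 ?max_r; lra.
apply: (@OPT_ge1 _ _ (e, 1 - e)); first exact: valid_prof3_01.
- by apply/andP; split => /=; lra.
- by apply/andP; split => /=; lra.
by move=> i j; rewrite !dist_e.
Qed.

Lemma cgini_facility_at y z : 7^-1 <= y <= 6 / 7 -> in01 z.1 -> in01 z.2 ->
  fdist z y = 0 -> 0 < cgini (prof3 y 0 1) z <= 29 / 30.
Proof.
case: z => r s /= /andP[y_lo y_hi] /andP[r_ge0 r_le1] /andP[s_ge0 s_le1] at_y.
have facility : y = r \/ y = s by apply/fdist_eq0.
rewrite cgini_prof3 /util at_y fdist0 // fdist1 // subr0 subKr.
(* The end agent not served by y is at distance d >= min(y, 1 - y) >= 1/7, which
   is exactly what is needed: the utilities sum to at most 3 - d <= 20 d. *)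
case: (leP r s) => rs; apply: gini_prof3_bounds; rewrite ?subKr ?ger0_norm ?subr_ge0 //; lra.
Qed.

Lemma cgini_facilities_far_from_centre p q : in01 p -> in01 q ->
  5 / 14 < fdist (p, q) 2^-1 -> 0 < cgini (prof3 2^-1 0 1) (p, q) <= 29 / 30.
Proof.
move=> p01 q01 far; have d_le1 : fdist (p, q) 2^-1 <= 1.
  exact: fdist_le1 in01_half.
have outside (x : R) : 5 / 14 < `|2^-1 - x| -> x < 7^-1 \/ 6 / 7 < x.
  by rewrite ltr_normr => /orP[]; lra.
move: (far); rewrite /fdist lt_min /= => /andP[/outside p_out /outside q_out].
case/andP: p01 => p_ge0 p_le1; case/andP: q01 => q_ge0 q_le1.
rewrite cgini_prof3 /util fdist0 // fdist1 // subKr.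
move: far d_le1; set d := fdist _ 2^-1 => far d_le1.
have normN_le (x : R) : - x <= `|x| by rewrite -normrN ler_norm.
have := normN_le (1 - d - (1 - Num.min p q)); have := normN_le (1 - d - Num.max p q).
by case: (leP p q) => ? ? ?; apply: gini_prof3_bounds; lra.
Qed.

Lemma approx_ratio_ge_facility_near_centre (M : mechanism R) y :
  mech_valid M -> strategy_proof M -> 7^-1 <= y <= 6 / 7 ->
  fdist (M 3 (prof3 2^-1 0 1)) y = 0 -> ((29 / 30)^-1%:E <= approx_ratio M)%E.
Proof.
move=> M_valid M_sp y_mid at_y.
have y01 : in01 y by apply/andP; split; lra.
have Z01 := valid_prof3_01 _ y01.
have Z_at_y : fdist (M 3 (prof3 y 0 1)) y = 0.
  by apply: (strategy_proof_keeps_facility M _ _ ord0 _ M_sp Z01 in01_half); rewrite deviate_prof3.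
apply: (approx_ratio_ge M _ _ _ _ Z01 (OPT_prof3_ge1 _ y01)) => //.
by have [z1 z2] := M_valid _ _ Z01; exact: cgini_facility_at.
Qed.

End TwoFacilities.

Theorem theorem8 (R : realType) (M : mechanism R) :
  mech_valid M -> strategy_proof M ->
  ((30%:R / 29%:R : R)%:E <= approx_ratio M)%E.
Proof.
move=> M_valid M_sp; rewrite -[30%:R / _]invf_div.
have X01 := valid_prof3_01 (2^-1 : R) in01_half.
have [p01 q01] := M_valid _ _ X01.
case E : (M 3 (prof3 2^-1 0 1)) p01 q01 => [p q] /= p01 q01.
have [near | far] := leP (fdist (p, q) 2^-1) (5 / 14).
- have [y facility near_y] := fdist_attained p q 2^-1.
  apply: (approx_ratio_ge_facility_near_centre M y M_valid M_sp).
    by move: near; rewrite near_y distrC ler_distl => /andP[? ?]; apply/andP; split; lra.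
  by rewrite E; apply/fdist_eq0.
- apply: (approx_ratio_ge M _ _ _ _ X01 (OPT_prof3_ge1 _ in01_half)) => //.
  by rewrite E; apply: cgini_facilities_far_from_centre.
Qed.
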